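(* Let $d\in\mathbb{N}$. If a linear functional $L:\mathbb{R}[\underline x]_{2d}\to\mathbb{R}$ satisfies $L(p^2)>0$ for all $p\in\mathbb{R}[\underline x]_d\setminus\{0\}$, then $L$ extends to a linear functional $\widetilde L:\mathbb{R}[\underline x]\to\mathbb{R}$ satisfying $\widetilde L(p^2)>0$ for all $p\in\mathbb{R}[\underline x]\setminus\{0\}$.
   Context: $\mathbb{R}[\underline x]=\mathbb{R}[x_1,\dots,x_n]$, and $\mathbb{R}[\underline x]_k$ denotes the subspace of polynomials of degree at most $k$. *)

From HB Require Import structures.
From mathcomp Require Import all_boot all_order all_algebra.
From mathcomp Require Import reals.
From mathcomp Require Import mpoly.
Set Implicit Arguments. Unset Strict Implicit. Unset Printing Implicit Defensive.
Import Order.TTheory GRing.Theory Num.Theory.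
Local Open Scope ring_scope.

(* R[x_1..x_n]_k : polynomials of total degree at most k.
   msize p = 1 + total degree of p, and msize 0 = 0. *)
Definition deg_le (R : ringType) (n k : nat) (p : {mpoly R[n]}) : bool :=
  (msize p <= k.+1)%N.

Definition linear_on (R : ringType) (n : nat) (P : {mpoly R[n]} -> bool)
  (L : {mpoly R[n]} -> R) : Prop :=
  forall (a : R) (p q : {mpoly R[n]}), P p -> P q ->
    L (a *: p + q) = a * L p + L q.

From HB Require Import structures.
From mathcomp Require Import all_boot all_order all_algebra.
From mathcomp Require Import reals.
From mathcomp Require Import mpoly ssrcomplements.
From mathcomp Require Import ring lra zify.
From Stdlib Require Import ClassicalEpsilon.
Import Order.TTheory GRing.Theory Num.Theory.
Local Open Scope ring_scope.

(* A functional on polynomials is given by its moments [ell m = L 'X_[m]], and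
   positivity of [L] on squares of degree at most [D] is positive definiteness
   of the Hankel form [sum_(i,j) v i * v j * ell (i + j)] over monomials of
   degree at most [D].  Such a form extends from [D] to [D.+1]: keep the moments
   up to degree [2D+1] and give a monomial [m] of degree [2D+2] the moment
   [W ^+ (sum_k m_k ^ 2)].  By strict convexity of [m |-> sum_k m_k ^ 2] the new
   top block is diagonally dominant for large [W], and its cross terms with the
   old block are absorbed by a bound [c * v i ^+ 2 <= Q v] valid for every
   positive definite form [Q] (Schur complement induction).  Iterating gives a
   coherent sequence of moment functions, whose limit defines the extension. *)

Lemma sqr_sum_le (T : eqType) (R : realFieldType) (s : seq T) (a x : T -> R) (t : R) :
  (forall j, j \in s -> x j ^+ 2 <= t) ->
  (\sum_(j <- s) a j * x j) ^+ 2 <= (\sum_(j <- s) `|a j|) ^+ 2 * t.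
Proof.
move=> x_le.
have norm_le : `|\sum_(j <- s) a j * x j| <= \sum_(j <- s) `|a j| * `|x j|.
  by apply: le_trans (ler_norm_sum _ _ _) _; apply: ler_sum => j _; rewrite normrM.
apply: le_trans (_ : (\sum_(j <- s) `|a j| * `|x j|) ^+ 2 <= _).
  rewrite -real_normK ?num_real // lerXn2r ?nnegrE ?sumr_ge0 ?norm_le //.
  by move=> j _; rewrite mulr_ge0.
rewrite !expr2 !mulr_suml big_seq_cond [leRHS]big_seq_cond.
apply: ler_sum => i /andP[si _]; rewrite !mulr_sumr mulr_suml.
rewrite big_seq_cond [leRHS]big_seq_cond; apply: ler_sum => j /andP[sj _].
have xixj : `|x i| * `|x j| <= t.
  have := x_le i si; have := x_le j sj; rewrite -!(real_normK (num_real (x _))).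
  have := normr_ge0 (x i); have := normr_ge0 (x j); nra.
have := normr_ge0 (x i); have := normr_ge0 (x j).
have : 0 <= `|a i| * `|a j| by rewrite mulr_ge0.
nra.
Qed.

Section QuadraticForm.
Context {T : eqType} {R : realFieldType}.
Implicit Types (s : seq T) (A : T -> T -> R) (v : T -> R).

Definition qform s A v : R := \sum_(i <- s) \sum_(j <- s) v i * v j * A i j.

Definition posdef s A : Prop :=
  forall v, has (fun i => v i != 0) s -> 0 < qform s A v.

Lemma eq_qform s A v v' : {in s, v =1 v'} -> qform s A v = qform s A v'.
Proof.
move=> eq_v; apply: eq_big_seq => i si; apply: eq_big_seq => j sj.
by rewrite !eq_v.
Qed.
Arguments eq_qform {s} A {v v'}.

Lemma posdef_qform_ge0 s A v : posdef s A -> 0 <= qform s A v.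
Proof.
move=> pdA; have [/pdA/ltW //|/hasPn v0] := boolP (has (fun i => v i != 0) s).
rewrite (@eq_qform _ _ _ (fun=> 0)); last by move=> i /v0; rewrite negbK => /eqP.
by rewrite /qform big1 // => i _; rewrite big1 // => j _; rewrite !mul0r.
Qed.

Definition schur A i0 i j : R := A i j - A i0 i * A i0 j / A i0 i0.

Lemma qform_cons_schur s A i0 v : (forall i j, A i j = A j i) -> A i0 i0 != 0 ->
  qform (i0 :: s) A v = A i0 i0 * (v i0 + (\sum_(j <- s) v j * A i0 j) / A i0 i0) ^+ 2
                        + qform s (schur A i0) v.
Proof.
move=> A_sym w_neq0; set b := \sum_(j <- s) _.
have -> : qform s (schur A i0) v = qform s A v - b ^+ 2 / A i0 i0.
  rewrite /qform /schur expr2 mulr_suml mulr_suml -sumrB; apply: eq_bigr => i _.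
  rewrite mulr_sumr mulr_suml -sumrB; apply: eq_bigr => j _; field.
  exact: w_neq0.
rewrite /qform big_cons big_cons.
under [X in _ + X]eq_bigr => i _ do rewrite big_cons.
rewrite big_split /= -!/(qform _ _ _).
have -> : \sum_(i <- s) v i * v i0 * A i i0 = v i0 * b.
  by rewrite mulr_sumr; apply: eq_bigr => i _; rewrite A_sym; ring.
have -> : \sum_(j <- s) v i0 * v j * A i0 j = v i0 * b.
  by rewrite mulr_sumr; apply: eq_bigr => i _; ring.
by field.
Qed.

Lemma posdef_cons_diag s A i0 : i0 \notin s -> posdef (i0 :: s) A -> 0 < A i0 i0.
Proof.
move=> i0Ns pdA; pose e i := (i == i0)%:R : R.
have e0 : {in s, forall i, e i = 0}.
  by move=> i si; rewrite /e; case: eqP si => // ->; rewrite (negbTE i0Ns).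
have /pdA : has (fun i => e i != 0) (i0 :: s) by rewrite /= /e eqxx oner_neq0.
rewrite /qform big_cons big_cons big1_seq ?addr0; last first.
  by move=> j /andP[_ /e0 ->]; rewrite mulr0 mul0r.
rewrite big1_seq ?addr0; last first.
  by move=> i /andP[_ /e0 ->]; rewrite big1 // => j _; rewrite !mul0r.
by rewrite /e eqxx !mul1r.
Qed.
Arguments posdef_cons_diag {s A i0}.

Lemma posdef_schur s A i0 : (forall i j, A i j = A j i) -> i0 \notin s ->
  posdef (i0 :: s) A -> posdef s (schur A i0).
Proof.
move=> A_sym i0Ns pdA v v_neq0.
have w_neq0 : A i0 i0 != 0 by rewrite gt_eqF // (posdef_cons_diag i0Ns pdA).
pose b := \sum_(j <- s) v j * A i0 j.
pose v' i := if i == i0 then - b / A i0 i0 else v i.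
have v'E : {in s, v' =1 v}.
  by move=> i si; rewrite /v'; case: eqP si => // ->; rewrite (negbTE i0Ns).
have b'E : \sum_(j <- s) v' j * A i0 j = b by apply: eq_big_seq => j /v'E ->.
rewrite -(eq_qform _ v'E).
have v'i0 : v' i0 = - b / A i0 i0 by rewrite /v' eqxx.
have := pdA v'; rewrite qform_cons_schur // b'E v'i0 mulNr addNr expr0n /= mulr0 add0r.
by apply; apply/orP; right; rewrite (eq_in_has (a2 := fun i => v i != 0)) // => i /v'E ->.
Qed.
Arguments posdef_schur {s A i0}.

Lemma posdef_coord_bound s A : uniq s -> (forall i j, A i j = A j i) -> posdef s A ->
  exists2 c, 0 < c & forall v i, i \in s -> c * v i ^+ 2 <= qform s A v.
Proof.
elim: s A => [|i0 s IH] A; first by move=> _ _ _; exists 1.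
move=> /andP[i0Ns s_uniq] A_sym pdA.
have w_gt0 := posdef_cons_diag i0Ns pdA.
have schur_sym i j : schur A i0 i j = schur A i0 j i.
  by rewrite /schur A_sym; congr (_ - _); ring.
have pd_schur := posdef_schur A_sym i0Ns pdA.
have [c' c'_gt0 c'_le] := IH _ s_uniq schur_sym pd_schur.
pose S := \sum_(j <- s) `|A i0 j|.
pose a := S ^+ 2 / (c' * A i0 i0 ^+ 2).
have a_ge0 : 0 <= a by rewrite divr_ge0 ?sqr_ge0 // ltW // mulr_gt0 ?exprn_gt0.
pose K := 2 / A i0 i0 + 2 * a.
have K_gt0 : 0 < K.
  have : 0 < 2 / A i0 i0 by rewrite divr_gt0.
  rewrite /K; lra.
exists (Num.min c' K^-1); first by rewrite lt_min c'_gt0 invr_gt0.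
move=> v i; rewrite qform_cons_schur ?gt_eqF //.
set b := \sum_(j <- s) _; set z := v i0 + _; set r := qform s _ v.
have r_ge0 : 0 <= r by apply: posdef_qform_ge0.
have wz_ge0 : 0 <= A i0 i0 * z ^+ 2 by rewrite mulr_ge0 ?sqr_ge0 ?ltW.
rewrite inE => /predU1P[->|si]; last first.
  apply: le_trans (_ : c' * v i ^+ 2 <= _); last by rewrite ler_wpDl ?c'_le.
  by rewrite ler_wpM2r ?sqr_ge0 ?ge_min ?lexx.
have b_le : (b / A i0 i0) ^+ 2 <= a * r.
  have : b ^+ 2 <= S ^+ 2 * (r / c').
    rewrite /b (eq_bigr (fun j => A i0 j * v j)) => [|j _]; last exact: mulrC.
    by apply: sqr_sum_le => j sj; rewrite ler_pdivlMr // mulrC c'_le.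
  rewrite expr_div_n ler_pdivrMr ?exprn_gt0 //.
  suff -> : a * r * A i0 i0 ^+ 2 = S ^+ 2 * (r / c') by [].
  by rewrite /a; field; rewrite !gt_eqF.
have v0_le : v i0 ^+ 2 <= K * (A i0 i0 * z ^+ 2 + r).
  have -> : v i0 = z - b / A i0 i0 by rewrite /z addrK.
  have : 0 <= (z + b / A i0 i0) ^+ 2 by exact: sqr_ge0.
  have -> : K * (A i0 i0 * z ^+ 2 + r)
          = 2 * z ^+ 2 + 2 * (a * r) + (2 / A i0 i0 * r + 2 * a * (A i0 i0 * z ^+ 2)).
    by rewrite /K; field; rewrite gt_eqF.
  have : 0 <= 2 / A i0 i0 * r by rewrite mulr_ge0 // divr_ge0 // ltW.
  have : 0 <= 2 * a * (A i0 i0 * z ^+ 2) by rewrite mulr_ge0 // mulr_ge0.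
  nra.
apply: le_trans (_ : K^-1 * v i0 ^+ 2 <= _).
  by rewrite ler_wpM2r ?sqr_ge0 // ge_min lexx orbT.
by rewrite -ler_pdivlMl ?invr_gt0 // invrK.
Qed.
End QuadraticForm.

Lemma sum_mul_norm_le (R : realFieldType) (I : finType) (u : I -> R) :
  \sum_i \sum_j `|u i| * `|u j| <= #|{: I}|%:R * \sum_i u i ^+ 2.
Proof.
have amgm (x y : R) : `|x| * `|y| <= (x ^+ 2 + y ^+ 2) / 2.
  by have := sqr_ge0 (`|x| - `|y|); rewrite sqrrB !real_normK ?num_real //; lra.
apply: le_trans (_ : \sum_i \sum_(j : I) (u i ^+ 2 + u j ^+ 2) / 2 <= _).
  by apply: ler_sum => i _; apply: ler_sum => j _; apply: amgm.
rewrite le_eqVlt; apply/orP; left; apply/eqP.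
under eq_bigr => i _ do rewrite -mulr_suml big_split sumr_const.
have halfD (x : R) : (x + x) / 2 = x by field.
by rewrite -mulr_suml big_split /= sumr_const mulr_natl sumrMnl halfD.
Qed.

Arguments sum_mul_norm_le {R I}.

Lemma sum_cross_le (R : realFieldType) (I J : finType) (a : I -> R) (h : J -> R)
    (B : I -> J -> R) (c k M P Q : R) :
  0 < c -> 0 < M -> \sum_i \sum_j `|B i j| <= M -> 4 * M ^+ 2 <= c * k -> 0 <= P + Q ->
  (forall i, c * a i ^+ 2 <= P) -> (forall j, k * h j ^+ 2 <= Q) ->
  4 * `|\sum_i \sum_j a i * h j * B i j| <= P + Q.
Proof.
move=> c_gt0 M_gt0 B_le ck_ge PQ_ge0 a_le h_le.
have amgm i j : 4 * M * (`|a i| * `|h j|) <= P + Q.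
  have := a_le i; have := h_le j.
  rewrite -(real_normK (num_real (a i))) -(real_normK (num_real (h j))).
  have := normr_ge0 (a i); have := normr_ge0 (h j).
  move: `|a i| `|h j| => x y y_ge0 x_ge0 y_le x_le.
  have cPQ : c * (c * x ^+ 2) + c * (k * y ^+ 2) <= c * (P + Q).
    by rewrite mulrDr lerD // ler_wpM2l // ltW.
  have cky : 4 * M ^+ 2 * y ^+ 2 <= c * (k * y ^+ 2) by rewrite mulrA ler_wpM2r ?sqr_ge0.
  rewrite -(ler_pM2l c_gt0); have := sqr_ge0 (c * x - 2 * M * y).
  by move: cPQ cky; clear; nra.
have C_le : `|\sum_i \sum_j a i * h j * B i j|
             <= \sum_i \sum_j `|B i j| * (`|a i| * `|h j|).
  apply: le_trans (ler_norm_sum _ _ _) _; apply: ler_sum => i _.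
  apply: le_trans (ler_norm_sum _ _ _) _; apply: ler_sum => j _.
  by rewrite !normrM mulrC.
have PQ_M : (\sum_i \sum_j `|B i j|) * ((P + Q) / M) <= P + Q.
  by rewrite mulrA ler_pdivrMr // [leRHS]mulrC ler_wpM2r.
apply: le_trans PQ_M; apply: le_trans (ler_wpM2l _ C_le) _ => //.
rewrite mulr_sumr mulr_suml; apply: ler_sum => i _.
rewrite mulr_sumr mulr_suml; apply: ler_sum => j _.
by rewrite mulrCA ler_wpM2l // ler_pdivlMr // mulrAC amgm.
Qed.
Arguments sum_cross_le {R I J a h B c k M P Q}.

Lemma large_weight {R : realFieldType} (M c N : R) : 0 < c -> 0 <= N ->
  exists W, [/\ 1 <= W, 2 * N <= W & 4 * M ^+ 2 <= c * (W ^+ 2 / 2)].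
Proof.
move=> c_gt0 N_ge0; have K_ge0 : 0 <= 8 * M ^+ 2 / c.
  by apply: divr_ge0; [rewrite mulr_ge0 ?sqr_ge0 | exact: ltW].
exists (2 * N + 8 * M ^+ 2 / c + 1); split; [lra | lra |].
have K_le : 8 * M ^+ 2 / c <= (2 * N + 8 * M ^+ 2 / c + 1) ^+ 2.
  by apply: le_trans (ler_eXnr _ _) => //; lra.
have cK : c * (8 * M ^+ 2 / c) = 8 * M ^+ 2 by field; rewrite gt_eqF.
by have := ler_wpM2l (ltW c_gt0) K_le; rewrite cK mulrA; lra.
Qed.

Definition mnm_sqnorm (n : nat) (m : 'X_{1..n}) : nat := (\sum_(k < n) m k * m k)%N.
Arguments mnm_sqnorm {n}.

Lemma mnm_sqnorm_double (n : nat) (m : 'X_{1..n}) :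
  mnm_sqnorm (m + m)%MM = (4 * mnm_sqnorm m)%N.
Proof.
by rewrite /mnm_sqnorm big_distrr /=; apply: eq_bigr => k _; rewrite mnmDE; nia.
Qed.

Lemma mnm_sqnormD_lt (n : nat) (m1 m2 : 'X_{1..n}) : m1 != m2 ->
  (mnm_sqnorm (m1 + m2)%MM < 2 * mnm_sqnorm m1 + 2 * mnm_sqnorm m2)%N.
Proof.
have parallelogram (x y : nat) : ((x + y) * (x + y) + (x - y) * (x - y) + (y - x) * (y - x)
                                   = 2 * (x * x) + 2 * (y * y))%N by nia.
have sqrD_le (x y : nat) : ((x + y) * (x + y) <= 2 * (x * x) + 2 * (y * y))%N.
  by rewrite -parallelogram -addnA leq_addr.
have sqrD_lt (x y : nat) : x != y -> ((x + y) * (x + y) < 2 * (x * x) + 2 * (y * y))%N.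
  move=> /eqP x_neq_y; rewrite -parallelogram -addnA -[X in (X < _)%N]addn0 ltn_add2l.
  by rewrite addn_gt0 !muln_gt0 !andbb !subn_gt0; apply/orP; lia.
move=> /eqP m12; have [k mk] : exists k, m1 k != m2 k.
  by apply/existsP; apply: contra_notT m12 => /existsPn mE; apply/mnmP => k; apply/eqP/negPn.
rewrite /mnm_sqnorm !big_distrr /= -big_split /= (bigD1 k) //= [in X in (_ < X)%N](bigD1 k) //=.
rewrite -addSn mnmDE leq_add ?sqrD_lt //.
by apply: leq_sum => i _; rewrite mnmDE.
Qed.

Lemma mnm_sqnorm_gt0 {n : nat} (m : 'X_{1..n}) : (0 < mdeg m)%N -> (0 < mnm_sqnorm m)%N.
Proof.
rewrite mdegE /mnm_sqnorm => /leq_trans; apply; apply: leq_sum => i _; nia.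
Qed.

Lemma big_bmnm_widen (R : nmodType) (n b : nat) (f : 'X_{1..n} -> R) :
  (forall m, (b <= mdeg m)%N -> f m = 0) ->
  \sum_(m : 'X_{1..n < b.+1}) f m = \sum_(m : 'X_{1..n < b}) f m.
Proof.
move=> f0; pose Ib : subFinType _ := 'X_{1..n < b}; pose Ib1 : subFinType _ := 'X_{1..n < b.+1}.
rewrite (@eq_big_widen _ _ _ _ _ _ Ib Ib1 xpredT f) // => [m|m]; first exact: ltnW.
by rewrite -leqNgt => /f0.
Qed.
Arguments big_bmnm_widen {R n b}.

Definition hankel_form (R : nzRingType) (n D : nat) (ell u v : 'X_{1..n} -> R) : R :=
  \sum_(i : 'X_{1..n < D.+1}) \sum_(j : 'X_{1..n < D.+1}) u i * v j * ell (i + j)%MM.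
Arguments hankel_form {R n}.

Section Riesz.
Context {R : comNzRingType} {n : nat} (ell : 'X_{1..n} -> R).

Definition riesz (p : {mpoly R[n]}) : R := \sum_(m <- msupp p) p@_m * ell m.

Lemma rieszE (p : {mpoly R[n]}) k :
  (msize p <= k)%N -> riesz p = \sum_(m : 'X_{1..n < k}) p@_m * ell m.
Proof.
move=> le_pk; rewrite /riesz (big_mksub 'X_{1..n < k}) ?msupp_uniq //=; last first.
  by move=> m /msize_mdeg_lt /leq_trans; apply.
by rewrite big_rmcond //= => m /memN_msupp_eq0 ->; rewrite mul0r.
Qed.

Lemma riesz_linear a (p q : {mpoly R[n]}) : riesz (a *: p + q) = a * riesz p + riesz q.
Proof.
pose k := maxn (msize p) (msize q).
have le_pk : (msize p <= k)%N by rewrite leq_maxl.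
have le_qk : (msize q <= k)%N by rewrite leq_maxr.
have le_pqk : (msize (a *: p + q) <= k)%N.
  by rewrite (leq_trans (msizeD_le _ _)) // geq_max le_qk (leq_trans (mmeasureZ_le _ _ _)).
rewrite !(rieszE _ _ le_pk) !(rieszE _ _ le_qk) !(rieszE _ _ le_pqk) mulr_sumr -big_split /=.
by apply: eq_bigr => m _; rewrite mcoeffD mcoeffZ; ring.
Qed.

Lemma riesz0 : riesz 0 = 0.
Proof. by rewrite /riesz msupp0 big_nil. Qed.

Lemma rieszD (p q : {mpoly R[n]}) : riesz (p + q) = riesz p + riesz q.
Proof. by have := riesz_linear 1 p q; rewrite scale1r mul1r. Qed.

Lemma rieszZ a (p : {mpoly R[n]}) : riesz (a *: p) = a * riesz p.
Proof. by rewrite -[a *: p]addr0 riesz_linear riesz0 addr0. Qed.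

Lemma rieszX (m : 'X_{1..n}) : riesz 'X_[m] = ell m.
Proof. by rewrite /riesz msuppX big_seq1 mcoeffX eqxx mul1r. Qed.

Lemma riesz_sqr (p : {mpoly R[n]}) D : (msize p <= D.+1)%N ->
  riesz (p * p) = hankel_form D ell (fun m => p@_m) (fun m => p@_m).
Proof.
move=> le_pD; rewrite (mpolywME le_pD le_pD) (big_morph riesz rieszD riesz0).
rewrite /hankel_form pair_big /=.
by apply: eq_bigr => ij _; rewrite rieszZ rieszX.
Qed.

End Riesz.
Arguments rieszE {R n ell p k}.
Arguments riesz_sqr {R n ell p D}.

Lemma linear_on_riesz (R : comNzRingType) (n k : nat) (L : {mpoly R[n]} -> R) p :
  linear_on (deg_le k) L -> deg_le k p -> L p = riesz (fun m => L 'X_[m]) p.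
Proof.
move=> linL le_pk; rewrite (rieszE le_pk) {1}(mpolywE le_pk).
have deg_le0 : deg_le k (0 : {mpoly R[n]}) by rewrite /deg_le msize0.
have L0 : L 0 = 0.
  have := linL 1 0 0 deg_le0 deg_le0; rewrite scale1r addr0 mul1r => L0_double.
  by apply/esym/(addrI (L 0)); rewrite addr0 {1}L0_double.
have deg_leX (m : 'X_{1..n < k.+1}) c : deg_le k (c *: 'X_[m]).
  by rewrite /deg_le (leq_trans (mmeasureZ_le _ _ _)) // msizeX bmdeg.
suff [] : deg_le k (\sum_(m : 'X_{1..n < k.+1}) p@_m *: 'X_[m])
          /\ L (\sum_(m : 'X_{1..n < k.+1}) p@_m *: 'X_[m])
              = \sum_(m : 'X_{1..n < k.+1}) p@_m * L 'X_[m] by [].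
apply: (big_ind2 (fun q x => deg_le k q /\ L q = x)) => [|q1 x1 q2 x2 [le1 <-] [le2 <-]|m _].
- by [].
- split; first by rewrite /deg_le (leq_trans (msizeD_le _ _)) // geq_max; apply/andP.
  by have := linL 1 q1 q2 le1 le2; rewrite scale1r mul1r.
- split; first exact: deg_leX.
  by rewrite -[_ *: _]addr0 linL ?L0 ?addr0 // /deg_le msizeX bmdeg.
Qed.
Arguments linear_on_riesz {R n k L p}.

Lemma msize_sum_mpolyX (R : nzRingType) (n k : nat) (E : 'X_{1..n} -> R) :
  (msize (\sum_(m : 'X_{1..n < k}) E m *: 'X_[m] : {mpoly R[n]}) <= k)%N.
Proof.
elim/big_ind: _ => [|p q le_p le_q|m _]; first by rewrite msize0.
  by rewrite (leq_trans (msizeD_le _ _)) // geq_max le_p le_q.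
by rewrite (leq_trans (mmeasureZ_le _ _ _)) // msizeX bmdeg.
Qed.

Section Hankel.
Context {R : realFieldType} {n : nat}.
Implicit Types (D : nat) (ell u v a h : 'X_{1..n} -> R).

Definition hankel_posdef D ell : Prop :=
  forall v, (exists i : 'X_{1..n < D.+1}, v i != 0) -> 0 < hankel_form D ell v v.

Lemma hankel_formC D ell u v : hankel_form D ell u v = hankel_form D ell v u.
Proof.
rewrite /hankel_form exchange_big; apply: eq_bigr => i _; apply: eq_bigr => j _.
by rewrite addmC [u j * v i]mulrC.
Qed.

Lemma hankel_form_split D ell v a h : (forall i : 'X_{1..n < D.+1}, v i = a i + h i) ->
  hankel_form D ell v v = hankel_form D ell a a + 2 * hankel_form D ell a h
                          + hankel_form D ell h h.
Proof.
move=> vE; rewrite mulr2n mulrDl mul1r {2}hankel_formC /hankel_form -!big_split /=.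
apply: eq_bigr => i _; rewrite -!big_split; apply: eq_bigr => j _ /=.
by rewrite !vE; ring.
Qed.

Lemma hankel_form_widen D ell u : (forall m, (D < mdeg m)%N -> u m = 0) ->
  hankel_form D.+1 ell u u = hankel_form D ell u u.
Proof.
move=> u0; rewrite /hankel_form.
rewrite (big_bmnm_widen (fun i => \sum_(j : 'X_{1..n < D.+2}) u i * u j * ell (i + j)%MM));
  last by move=> m /u0 ->; rewrite big1 // => j _; rewrite !mul0r.
apply: eq_bigr => i _; rewrite (big_bmnm_widen (fun j => u i * u j * ell (i + j)%MM)) //.
move=> m /u0 ->.
by rewrite mulr0 mul0r.
Qed.

Lemma eq_hankel_form D ell ell' u v : (forall m, (mdeg m <= 2 * D)%N -> ell m = ell' m) ->
  hankel_form D ell u v = hankel_form D ell' u v.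
Proof.
move=> ellE; apply: eq_bigr => i _; apply: eq_bigr => j _; rewrite ellE // mdegD.
by have := bmdeg i; have := bmdeg j; lia.
Qed.

Lemma hankel_posdef_coord_bound D ell : hankel_posdef D ell -> exists2 c, 0 < c &
  forall v (i : 'X_{1..n < D.+1}), c * v i ^+ 2 <= hankel_form D ell v v.
Proof.
move=> pd_ell.
have [||v' /hasP[i0 _ v'i0]|c c_gt0 c_le] :=
  @posdef_coord_bound _ R (index_enum 'X_{1..n < D.+1}) (fun i j => ell (val i + val j)%MM).
- exact: index_enum_uniq.
- by move=> i j; rewrite addmC.
- pose v m := if insub m is Some i then v' i else 0.
  have vE (i : 'X_{1..n < D.+1}) : v (val i) = v' i by rewrite /v valK.
  rewrite (_ : qform _ _ v' = hankel_form D ell v v); first by apply: pd_ell; exists i0; rewrite vE.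
  by apply: eq_bigr => k _; apply: eq_bigr => l _; rewrite !vE.
by exists c => // v i; apply: (c_le (fun i => v (val i))); rewrite mem_index_enum.
Qed.

End Hankel.
Arguments hankel_form_split {R n D ell v a h}.
Arguments hankel_posdef_coord_bound {R n D ell}.

Lemma hankel_posdef_riesz (R : realFieldType) (n D : nat) (ell : 'X_{1..n} -> R) :
  hankel_posdef D ell <->
  forall p : {mpoly R[n]}, (msize p <= D.+1)%N -> p != 0 -> 0 < riesz ell (p * p).
Proof.
split=> [pd_ell p le_pD p_neq0 | pos_ell v [i vi]].
  rewrite (riesz_sqr le_pD); apply: pd_ell.
  have lt_lead : (mdeg (mlead p) < D.+1)%N by rewrite -(mlead_deg p_neq0) in le_pD.
  by exists (BMultinom lt_lead); rewrite mleadc_eq0.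
pose p : {mpoly R[n]} := \sum_(m : 'X_{1..n < D.+1}) v m *: 'X_[m].
have pE (m : 'X_{1..n < D.+1}) : p@_m = v m by rewrite mcoeff_mpoly ?bmdeg.
have p_neq0 : p != 0 by apply: contraNneq vi => p0; rewrite -pE p0 mcoeff0.
have le_pD : (msize p <= D.+1)%N by apply: msize_sum_mpolyX.
have := pos_ell p le_pD p_neq0; rewrite (riesz_sqr le_pD).
by congr (0 < _); apply: eq_bigr => k _; apply: eq_bigr => l _; rewrite !pE.
Qed.

Section TopBlock.
Context {R : realFieldType} {n : nat} (D : nat) (ell h : 'X_{1..n} -> R) (W : R).
Hypothesis W_ge1 : 1 <= W.
Hypothesis h_supp : forall m, mdeg m != D.+1 -> h m = 0.
Hypothesis ell_top : forall m, mdeg m = (2 * D.+1)%N -> ell m = W ^+ mnm_sqnorm m.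

Let W_gt0 : 0 < W. Proof. exact: lt_le_trans ltr01 W_ge1. Qed.

Let u m := h m * W ^+ (2 * mnm_sqnorm m).

Let deg_supp m : h m != 0 -> mdeg m = D.+1.
Proof. by move=> hm; apply/eqP; apply: contraNT hm => /h_supp ->. Qed.

(* Off the diagonal, [mnm_sqnormD_lt] gains a factor [W] over [|u i| * |u j|]. *)
Lemma top_entry_ge (i j : 'X_{1..n < D.+2}) :
  (i == j)%:R * u i ^+ 2 - `|u i| * `|u j| / W <= h i * h j * ell (i + j)%MM.
Proof.
have [hi0|hi] := eqVneq (h i) 0.
  by rewrite /u hi0 !(mul0r, normr0, expr0n) mulr0 subr0.
have [hj0|hj] := eqVneq (h j) 0.
  have [ij|_] := eqVneq i j; first by rewrite ij hj0 eqxx in hi.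
  by rewrite /u hj0 !(mul0r, normr0, mulr0) subr0.
rewrite ell_top; last by rewrite mdegD !deg_supp // addnn -mul2n.
have [<-|i_neq_j] := eqVneq i j.
  rewrite mul1r mnm_sqnorm_double.
  have -> : h i * h i * W ^+ (4 * mnm_sqnorm i) = u i ^+ 2.
    by rewrite /u exprMn -exprM mulnAC.
  by rewrite gerBl divr_ge0 ?mulr_ge0 // ltW.
rewrite mul0r sub0r lerNnormlW // !normrM !(ger0_norm (exprn_ge0 _ (ltW W_gt0))).
have W_pow : W ^+ mnm_sqnorm (i + j)%MM <= W ^+ (2 * mnm_sqnorm i) * W ^+ (2 * mnm_sqnorm j) / W.
  by rewrite ler_pdivlMr // -exprSr -exprD ler_weXn2l // mnm_sqnormD_lt.
rewrite (_ : _ / W = `|h i| * `|h j| * (W ^+ (2 * mnm_sqnorm i) * W ^+ (2 * mnm_sqnorm j) / W)).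
  by apply: ler_wpM2l W_pow; rewrite mulr_ge0.
by rewrite !mulrA; congr (_ / _); ring.
Qed.

Lemma hankel_form_top_ge : 2 * #|{: 'X_{1..n < D.+2}}|%:R <= W ->
  forall m, W ^+ 2 / 2 * h m ^+ 2 <= hankel_form D.+1 ell h h.
Proof.
move=> WN m; set N : R := #|{: _}|%:R in WN.
set S := \sum_(i : 'X_{1..n < D.+2}) u i ^+ 2.
have S_ge0 : 0 <= S by apply: sumr_ge0 => i _; apply: sqr_ge0.
have diag i : \sum_(j : 'X_{1..n < D.+2}) (i == j)%:R * u i ^+ 2 = u i ^+ 2.
  rewrite (bigD1 i) //= eqxx mul1r big1 ?addr0 // => j.
  by rewrite eq_sym => /negbTE ->; rewrite mul0r.
have half_S : S / 2 <= hankel_form D.+1 ell h h.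
  apply: le_trans (ler_sum _ (fun i _ => ler_sum _ (fun j _ => top_entry_ge i j))).
  under eq_bigr => i _ do rewrite sumrB diag -mulr_suml.
  rewrite sumrB -mulr_suml -/S; set X := \sum_i _.
  have X_le : X <= N * S := sum_mul_norm_le (fun i : 'X_{1..n < D.+2} => u i).
  suff : X / W <= S / 2 by lra.
  by rewrite ler_pdivrMr //; apply: le_trans X_le _; nra.
apply: le_trans half_S; have [hm0|hm] := eqVneq (h m) 0.
  by rewrite hm0 expr0n mulr0 divr_ge0.
have m_lt : (mdeg m < D.+2)%N by rewrite deg_supp.
pose m' : 'X_{1..n < D.+2} := BMultinom m_lt.
rewrite ler_pdivlMr // mulrAC divfK ?pnatr_eq0 //.
apply: le_trans (_ : u m' ^+ 2 <= S).
  rewrite /u exprMn mulrC ler_wpM2l ?sqr_ge0 // -exprM ler_weXn2l //.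
  by have := mnm_sqnorm_gt0 m; rewrite deg_supp // => /(_ isT) /=; lia.
by rewrite /S (bigD1 m') //= lerDl sumr_ge0 // => i _; apply: sqr_ge0.
Qed.
End TopBlock.
Arguments hankel_form_top_ge {R n D ell h W}.

Definition extend_moments (R : nzRingType) (n D : nat) (ell : 'X_{1..n} -> R) (W : R) :
    'X_{1..n} -> R :=
  fun m => if (mdeg m <= (2 * D).+1)%N then ell m else W ^+ mnm_sqnorm m.
Arguments extend_moments {R n}.

Section Extension.
Context {R : realFieldType} {n : nat} (D : nat) (ell : 'X_{1..n} -> R).
Implicit Types (v : 'X_{1..n} -> R) (W : R).

Definition low_part v m : R := if (mdeg m <= D)%N then v m else 0.
Definition top_part v m : R := if mdeg m == D.+1 then v m else 0.

Lemma hankel_form_extend_split W v :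
  hankel_form D.+1 (extend_moments D ell W) v v
  = hankel_form D ell (low_part v) (low_part v)
    + 2 * hankel_form D.+1 ell (low_part v) (top_part v)
    + hankel_form D.+1 (extend_moments D ell W) (top_part v) (top_part v).
Proof.
have vE (i : 'X_{1..n < D.+2}) : v i = low_part v i + top_part v i.
  rewrite /low_part /top_part; have := bmdeg i.
  case: (leqP (mdeg i) D) => [le_iD|lt_Di] lt_i.
    by rewrite ifF ?addr0 //; apply/negbTE; rewrite neq_ltn ltnS le_iD.
  by rewrite ifT ?add0r //; apply/eqP; lia.
rewrite (hankel_form_split vE); congr (_ + 2 * _ + _).
  rewrite hankel_form_widen => [|m lt_Dm]; last by rewrite /low_part leqNgt lt_Dm.
  apply: eq_hankel_form => m le_m.
  by rewrite /extend_moments ifT //; lia.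
apply: eq_bigr => i _; apply: eq_bigr => j _; rewrite /low_part /top_part.
have [le_iD|_] := leqP (mdeg i) D; last by rewrite !mul0r.
have [e_jD|_] := eqVneq (mdeg j) D.+1; last by rewrite mulr0 !mul0r.
by rewrite /extend_moments mdegD e_jD ifT //; lia.
Qed.

Lemma hankel_posdef_extend :
  hankel_posdef D ell -> exists W, hankel_posdef D.+1 (extend_moments D ell W).
Proof.
move=> pd_ell; have [c c_gt0 c_le] := hankel_posdef_coord_bound pd_ell.
pose X := \sum_(i : 'X_{1..n < D.+2}) \sum_(j : 'X_{1..n < D.+2}) `|ell (i + j)%MM|.
have X_ge0 : 0 <= X by apply: sumr_ge0 => i _; apply: sumr_ge0 => j _.
pose N : R := #|{: 'X_{1..n < D.+2}}|%:R.
have N_ge0 : 0 <= N by rewrite ler0n.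
have [W [W_ge1 WN Wc]] := large_weight (X + 1) _ _ c_gt0 N_ge0.
exists W => v [j0 vj0]; rewrite hankel_form_extend_split.
set a := low_part v; set h := top_part v.
set Qa := hankel_form D ell a a; set C := hankel_form D.+1 ell a h.
set G := hankel_form D.+1 _ h h.
have Qa_ge0 : 0 <= Qa by apply: le_trans (c_le a bm0); rewrite mulr_ge0 ?sqr_ge0 ?ltW.
have Qa_le m : c * a m ^+ 2 <= Qa.
  have [le_mD|lt_Dm] := leqP (mdeg m) D.
    exact: (c_le a (BMultinom (le_mD : (mdeg m < D.+1)%N))).
  by rewrite /a /low_part leqNgt lt_Dm expr0n mulr0.
have G_le : forall m, W ^+ 2 / 2 * h m ^+ 2 <= G.
  apply: hankel_form_top_ge WN => // m; rewrite /h /top_part; first by move=> /negbTE ->.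
  by rewrite /extend_moments => ->; rewrite ifF //; apply/negbTE; lia.
have G_ge0 : 0 <= G by apply: le_trans (G_le 0%MM); rewrite mulr_ge0 ?sqr_ge0 ?divr_ge0 ?sqr_ge0.
have C_le : 4 * `|C| <= Qa + G.
  rewrite /C /hankel_form; apply: (sum_cross_le c_gt0 _ _ Wc) => [||||j] //.
  - by rewrite ltr_wpDl.
  - by rewrite -/X lerDl.
  - exact: addr_ge0.
have QaG_gt0 : 0 < Qa + G.
  have vj0_sqr : 0 < v j0 ^+ 2 by rewrite exprn_even_gt0.
  have [le_jD|lt_Dj] := leqP (mdeg j0) D.
    apply: ltr_wpDr G_ge0 _; apply: lt_le_trans (Qa_le j0).
    by rewrite /a /low_part le_jD mulr_gt0.
  have e_j0 : mdeg j0 == D.+1 by have := bmdeg j0; lia.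
  apply: ltr_wpDl Qa_ge0 _; apply: lt_le_trans (G_le j0).
  by rewrite /h /top_part e_j0 mulr_gt0 // divr_gt0 // exprn_gt0 // (lt_le_trans ltr01 W_ge1).
have := lerNnormlW (lexx `|C|); lra.
Qed.

End Extension.
Arguments hankel_posdef_extend {R n D ell}.

Section MomentSequence.
Context {R : realFieldType} {n : nat} (d : nat) (ell0 : 'X_{1..n} -> R).

(* When no admissible weight exists, [epsilon] returns an arbitrary one; this
   never happens along [moments_seq] (see [hankel_posdef_extend]). *)
Definition next_moments (D : nat) (ell : 'X_{1..n} -> R) : 'X_{1..n} -> R :=
  extend_moments D ell
    (epsilon (inhabits (0 : R)) (fun W => hankel_posdef D.+1 (extend_moments D ell W))).

Fixpoint moments_seq (j : nat) : 'X_{1..n} -> R :=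
  if j is j'.+1 then next_moments (d + j') (moments_seq j') else ell0.

Lemma moments_seq_posdef : hankel_posdef d ell0 -> forall j, hankel_posdef (d + j) (moments_seq j).
Proof.
move=> pd0; elim=> [|j IH]; first by rewrite addn0.
rewrite addnS /= /next_moments.
exact: (epsilon_spec (inhabits (0 : R)) _ (hankel_posdef_extend IH)).
Qed.

Lemma moments_seq_stable j k g : (mdeg g <= (2 * (d + j)).+1)%N ->
  moments_seq (j + k) g = moments_seq j g.
Proof.
move=> le_g; elim: k => [|k IH]; first by rewrite addn0.
rewrite addnS /= /next_moments /extend_moments ifT ?IH //; lia.
Qed.

Definition limit_moments (g : 'X_{1..n}) : R := moments_seq (mdeg g) g.

Lemma limit_momentsE j g : (mdeg g <= (2 * (d + j)).+1)%N -> limit_moments g = moments_seq j g.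
Proof.
move=> le_g; rewrite /limit_moments; case: (leqP j (mdeg g)) => [le_jg|lt_gj].
  by rewrite -(subnKC le_jg) moments_seq_stable.
by rewrite -(subnKC (ltnW lt_gj)) moments_seq_stable //; lia.
Qed.

Lemma riesz_limit_moments (p : {mpoly R[n]}) : (msize p <= (2 * d).+1)%N ->
  riesz limit_moments p = riesz ell0 p.
Proof.
move=> le_p; rewrite !(rieszE le_p); apply: eq_bigr => m _.
by rewrite (limit_momentsE 0) //; have := bmdeg m; lia.
Qed.

Lemma riesz_limit_moments_sqr_gt0 : hankel_posdef d ell0 ->
  forall p : {mpoly R[n]}, p != 0 -> 0 < riesz limit_moments (p * p).
Proof.
move=> pd0 p p_neq0; pose D := maxn d (msize p).
have le_dD : (d <= D)%N by apply: leq_maxl.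
have le_pD : (msize p <= D.+1)%N by apply/leqW/leq_maxr.
have pdD := moments_seq_posdef pd0 (D - d); rewrite subnKC // in pdD.
rewrite (riesz_sqr le_pD) (eq_hankel_form D _ (moments_seq (D - d))) => [|m le_m].
  by rewrite -(riesz_sqr le_pD); apply: (hankel_posdef_riesz _ _ _ _).1 pdD p le_pD p_neq0.
by rewrite (limit_momentsE (D - d)) // subnKC //; lia.
Qed.

End MomentSequence.

Theorem lemma3p4 (R : realType) (n d : nat) (L : {mpoly R[n]} -> R) :
  linear_on (deg_le (2 * d)) L ->
  (forall p : {mpoly R[n]}, deg_le d p -> p != 0 -> 0 < L (p ^+ 2)) ->
  exists Lt : {mpoly R[n]} -> R,
    [/\ linear_on (fun _ => true) Lt,
        (forall p : {mpoly R[n]}, deg_le (2 * d) p -> Lt p = L p) &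
        (forall p : {mpoly R[n]}, p != 0 -> 0 < Lt (p ^+ 2))].
Proof.
move=> linL posL; pose ell0 m := L 'X_[m].
have pd0 : hankel_posdef d ell0.
  apply/hankel_posdef_riesz => p le_pd p_neq0.
  have le_ppd : deg_le (2 * d) (p * p).
    by rewrite /deg_le msizeM // -subn1; move: le_pd; set k := msize p; lia.
  by rewrite -(linear_on_riesz linL le_ppd) -expr2 posL.
exists (riesz (limit_moments d ell0)); split=> [a p q _ _|p le_p|p p_neq0].
- exact: riesz_linear.
- by rewrite riesz_limit_moments // (linear_on_riesz linL le_p).
- by rewrite expr2 riesz_limit_moments_sqr_gt0.
Qed.
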